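(* Let $\mathcal P\subset\mathbb R^n$ be an $n$-dimensional convex polytope and consider $\dot x=Ax+a+Bu$, $x\in\mathcal P$, with $\operatorname{rank}(B)=n-1$, $(A,B)$ controllable and $\operatorname{int}\mathcal P\cap\mathcal O=\emptyset$. Let $y,z$ be distinct points of $\mathcal P$ and let $l$ be the line segment joining them. If $z,y\in\mathcal O$ and $y\in\mathcal B_z$, then $z\xrightarrow{l}y$.
   Context: $\mathcal B=\operatorname{Im}(B)$, $\mathcal O=\{x:Ax+a\in\mathcal B\}$; $\beta$ is the unit normal to $\mathcal B$ with $\beta^T(Ax+a)\le0$ on $\mathcal P$; $\mathcal B_z=\{x\in\mathbb R^n:\beta^Tx=\beta^Tz\}$. $z\xrightarrow{l}y$ means there exist a piecewise continuous control $u$ and $T\ge0$ such that the solution $\phi^u_t(z)$ satisfies $\phi^u_T(z)=y$ and $\phi^u_t(z)\in l$ for all $t\in[0,T]$. *)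

From HB Require Import structures.
From mathcomp Require Import all_boot all_order all_algebra.
From mathcomp Require Import all_classical all_reals all_analysis.
Set Implicit Arguments. Unset Strict Implicit. Unset Printing Implicit Defensive.
Import Order.TTheory GRing.Theory Num.Theory.
Import numFieldNormedType.Exports.
Local Open Scope classical_set_scope.
Local Open Scope ring_scope.

Section Defs.
Variables (R : realType) (n m : nat).

Definition conv_hull (k : nat) (v : 'I_k -> 'cV[R]_n) : set 'cV[R]_n :=
  [set x | exists w : 'I_k -> R,
     (forall i, 0 <= w i) /\ \sum_(i < k) w i = 1 /\ x = \sum_(i < k) w i *: v i].

(* an n-dimensional convex polytope: convex hull of finitely many points,
   with nonempty interior in R^n *)
Definition full_polytope (P : set 'cV[R]_n) : Prop :=
  (exists k (v : 'I_k -> 'cV[R]_n), P = conv_hull v) /\ interior P !=set0.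

Definition imB (B : 'M[R]_(n, m)) : set 'cV[R]_n :=
  [set x | exists v : 'cV[R]_m, x = B *m v].

Definition setO (A : 'M[R]_n) (a : 'cV[R]_n) (B : 'M[R]_(n, m)) : set 'cV[R]_n :=
  [set x | imB B (A *m x + a)].

(* Kalman rank condition: rank [B, AB, ..., A^(n-1) B] = n, stated as the
   rank of the sum of the row spaces of the transposed blocks *)
Definition controllable (A : 'M[R]_n) (B : 'M[R]_(n, m)) : Prop :=
  \rank (\sum_(i < n) <<(A ^+ i *m B)^T>>)%MS = n.

Definition segment (z y : 'cV[R]_n) : set 'cV[R]_n :=
  [set (1 - s) *: z + s *: y | s in `[0, 1]].

Definition hypB (beta z : 'cV[R]_n) : set 'cV[R]_n :=
  [set x | beta^T *m x = beta^T *m z].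

(* phi is the solution on [0,T] of  x' = A x + a + B u, x(0) = z, where u is
   piecewise continuous on [0,T]: there is a partition
   0 = t_0 <= t_1 <= ... <= t_k = T such that on each open piece (t_i,t_{i+1})
   u coincides with a function continuous on the closed piece [t_i,t_{i+1}];
   phi is continuous on [0,T] and satisfies the ODE on each open piece. *)
Definition is_solution (A : 'M[R]_n) (a : 'cV[R]_n) (B : 'M[R]_(n, m))
  (u : R -> 'cV[R]_m) (z : 'cV[R]_n) (T : R) (phi : R -> 'cV[R]_n) : Prop :=
  phi 0 = z /\ {within `[0, T], continuous phi} /\
  exists ts : seq R,
    let p := 0 :: rcons ts T in
    sorted <=%R p /\
    forall i : nat, (i < (size p).-1)%N ->
      let lo := nth 0 p i in let hi := nth 0 p i.+1 in
      (exists g : R -> 'cV[R]_m, {within `[lo, hi], continuous g} /\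
          forall t, lo < t < hi -> u t = g t) /\
      forall t, lo < t < hi -> is_derive t (1 : R) phi (A *m phi t + a + B *m u t).

Definition reaches_within (A : 'M[R]_n) (a : 'cV[R]_n) (B : 'M[R]_(n, m))
  (l : set 'cV[R]_n) (z y : 'cV[R]_n) : Prop :=
  exists (u : R -> 'cV[R]_m) (T : R) (phi : R -> 'cV[R]_n),
    0 <= T /\ is_solution A a B u z T phi /\ phi T = y /\
    forall t, 0 <= t <= T -> l (phi t).

End Defs.

From HB Require Import structures.
From mathcomp Require Import all_boot all_order all_algebra.
From mathcomp Require Import all_classical all_reals all_analysis.
Import Order.TTheory GRing.Theory Num.Theory.
Import numFieldNormedType.Exports.
Local Open Scope classical_set_scope.
Local Open Scope ring_scope.

(* Since rank B = n - 1 and beta^T B = 0, Im B is exactly the hyperplane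
   beta^T x = 0; so y - z = B w because y lies on B_z.  The drift x |-> A x + a
   is affine, hence maps the segment [z, y] into Im B as it does z and y.  Along
   x(t) = z + t (y - z) one can therefore choose u(t), affine in t, with
   A x(t) + a + B u(t) = y - z, and x(t) is the required trajectory. *)

Lemma orthogonal_in_image (F : fieldType) (n m : nat) (B : 'M[F]_(n, m))
    (beta d : 'cV[F]_n) :
  \rank B = n.-1 -> beta != 0 -> beta^T *m B = 0 -> beta^T *m d = 0 ->
  exists w : 'cV[F]_m, d = B *m w.
Proof.
move=> rankB beta_neq0 betaB betad.
have rank_beta : \rank beta = 1%N.
  by apply/eqP; rewrite eqn_leq rank_leq_col lt0n mxrank_eq0.
have ker_of_orth k (v : 'M[F]_(n, k)) : beta^T *m v = 0 -> (v^T <= kermx beta)%MS.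
  by move=> betav; apply/sub_kermxP; rewrite -[beta]trmxK -trmx_mul betav trmx0.
have [_ eq_ker] := mxrank_leqif_sup (ker_of_orth _ _ betaB).
move: eq_ker; rewrite mxrank_ker rank_beta mxrank_tr rankB subn1 eqxx => /esym ker_sub.
have /submxP[w dw] := submx_trans (ker_of_orth _ _ betad) ker_sub.
by exists w^T; rewrite -[d]trmxK dw trmx_mul trmxK.
Qed.

Lemma affine_comb_mulmx {R : comNzRingType} {n m : nat} {A : 'M[R]_n}
    {a : 'cV[R]_n} {B : 'M[R]_(n, m)} {z y : 'cV[R]_n} {vz vy : 'cV[R]_m} (t : R) :
  A *m z + a = B *m vz -> A *m y + a = B *m vy ->
  A *m ((1 - t) *: z + t *: y) + a = B *m ((1 - t) *: vz + t *: vy).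
Proof.
move=> Bvz Bvy.
have -> : a = (1 - t) *: a + t *: a by rewrite -scalerDl subrK scale1r.
rewrite mulmxDr -!scalemxAr addrACA -!scalerDr Bvz Bvy.
by rewrite mulmxDr -!scalemxAr.
Qed.

Lemma is_derive_line {R : realType} {V : normedModType R} (e c : V) (t : R) :
  is_derive t (1 : R) (fun s : R => s *: e + c) e.
Proof.
have de : is_derive t (1 : R) ( *:%R^~ e) e.
  apply: DeriveDef; first exact/diff_derivable.
  by rewrite deriveE // diff_val scale1r.
by have := is_deriveD de (is_derive_cst c t 1); rewrite addr0.
Qed.

Lemma within_continuous_line (R : realType) (V : normedModType R) (e c : V)
    (i : interval R) :
  {within [set` i], continuous (fun s : R => s *: e + c)}.
Proof.
by apply: derivable_within_continuous => t _; have [] := is_derive_line e c t.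
Qed.

Lemma segment_line (R : comNzRingType) (n : nat) (z y : 'cV[R]_n) (t : R) :
  (1 - t) *: z + t *: y = t *: (y - z) + z.
Proof.
by rewrite scalerBl scale1r scalerBr addrC addrA addrAC.
Qed.

Lemma reaches_along_segment (R : realType) (n m : nat) (A : 'M[R]_n)
    (a : 'cV[R]_n) (B : 'M[R]_(n, m)) (u : R -> 'cV[R]_m) (z y : 'cV[R]_n) :
  {within `[0, 1], continuous u} ->
  (forall t, A *m ((1 - t) *: z + t *: y) + a + B *m u t = y - z) ->
  reaches_within A a B (segment z y) z y.
Proof.
move=> u_cont velocity.
exists u, 1, (fun t => t *: (y - z) + z); split; first exact: ler01.
split; [split; [by rewrite scale0r add0r | split] |].
- exact: within_continuous_line.
- exists [::]; split; first by rewrite /= ler01.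
  move=> [|//] _; split; first by exists u.
  by move=> t _; rewrite -segment_line velocity; apply: is_derive_line.
split; first by rewrite scale1r subrK.
move=> t t01; exists t; last exact: segment_line.
by rewrite /= in_itv.
Qed.

Theorem lemma3 (R : realType) (n m : nat) (P : set 'cV[R]_n)
  (A : 'M[R]_n) (a : 'cV[R]_n) (B : 'M[R]_(n, m)) (beta : 'cV[R]_n)
  (y z : 'cV[R]_n) :
  full_polytope P ->
  \rank B = n.-1 ->
  controllable A B ->
  interior P `&` setO A a B = set0 ->
  beta^T *m beta = 1%:M ->
  beta^T *m B = 0 ->
  (forall x, P x -> (beta^T *m (A *m x + a)) 0 0 <= 0) ->
  P y -> P z -> y <> z ->
  setO A a B z -> setO A a B y -> hypB beta z y ->
  reaches_within A a B (segment z y) z y.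
Proof.
move=> _ rankB _ _ beta_unit betaB _ _ _ _ [vz Bvz] [vy Bvy] y_hyp.
have beta_neq0 : beta != 0.
  apply: contra_eq_neq beta_unit => ->; rewrite mulmx0.
  by apply/eqP => /matrixP/(_ 0 0); rewrite !mxE /= => /eqP; rewrite eq_sym oner_eq0.
have [w Bw] : exists w, y - z = B *m w.
  by apply: orthogonal_in_image rankB beta_neq0 betaB _; rewrite mulmxBr y_hyp subrr.
(* u t = w - ((1 - t) *: vz + t *: vy) cancels the drift along the segment
   and adds the constant velocity y - z = B w. *)
apply: (@reaches_along_segment _ _ _ _ _ _ (fun t => t *: (vz - vy) + (w - vz))).
  exact: within_continuous_line.
move=> t; rewrite (affine_comb_mulmx t Bvz Bvy) -mulmxDr Bw.
congr (B *m _).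
by rewrite segment_line addrACA -scalerDr -[vz - vy]opprB subrr scaler0 add0r addrC subrK.
Qed.
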